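(* Let $n>d\ge 2$ be integers. For every connected graph $G$ with $n$ vertices and diameter $d$, $$\sigma_2(G)\le \binom{n-d}{2}d^2+2(n-d-1)d^2+d^3.$$
   Context: All graphs are finite, simple, undirected. For a connected graph $G$ and $u\in V(G)$, the eccentricity $\varepsilon_G(u)=\max_{v\in V(G)} d_G(u,v)$, where $d_G$ is the shortest-path distance; the diameter is $\max_u\varepsilon_G(u)$. The second Zagreb eccentricity index is $\sigma_2(G)=\sum_{uv\in E(G)}\varepsilon_G(u)\varepsilon_G(v)$. *)

From mathcomp Require Import all_boot.
Set Implicit Arguments. Unset Strict Implicit. Unset Printing Implicit Defensive.

(* A finite simple undirected graph: vertex type T : finType and an
   adjacency relation e that is symmetric and irreflexive. *)
Section Graph.
Variables (T : finType) (e : rel T).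

Definition walk_of_len (u v : T) (k : nat) : bool :=
  [exists p : k.-tuple T, path e u p && (last u p == v)].

(* shortest-path distance: the least k (< #|T|) such that a walk of length k
   from u to v exists. In a connected graph this is the usual distance,
   since d(u,v) <= #|T| - 1. *)
Definition gdist (u v : T) : nat := find (walk_of_len u v) (iota 0 #|T|).

Definition gconnected : Prop := forall u v : T, connect e u v.

Definition ecc (u : T) : nat := \max_(v : T) gdist u v.

Definition diam : nat := \max_(u : T) ecc u.

Definition edges : {set {set T}} :=
  [set A : {set T} | [exists u : T, exists v : T, e u v && (A == [set u; v])]].

Definition sigma2 : nat := \sum_(A in edges) \prod_(x in A) ecc x.
End Graph.

From mathcomp Require Import all_boot zify.

(* Every eccentricity is at most d, so sigma2(G) <= |E(G)| * d^2 and it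
   suffices to bound the number of edges.  Fix a diametral geodesic
   u = x_0, x_1, ..., x_d = v.  Since it is a shortest walk, no walk between
   x_i and x_j is shorter than |j - i|.  Consequently
   - the x_i are pairwise distinct, so r = n - d - 1 vertices lie off the path;
   - an edge between two path vertices joins consecutive ones (d edges);
   - the path neighbours of an off-path vertex x occupy a window of three
     consecutive positions starting at its first path neighbour (<= 3 edges
     per off-path vertex);
   - the remaining edges join two off-path vertices (<= C(r, 2) edges).
   Hence |E(G)| <= C(r, 2) + 3r + d, and C(r, 2) + 3r + d equals
   C(n - d, 2) + 2(n - d - 1) + d, which gives the announced bound. *)

Section Walks.
Variables (T : finType) (e : rel T).

Lemma walkP (u v : T) (k : nat) :
  reflect (exists s, [/\ size s = k, path e u s & last u s = v])
          (walk_of_len e u v k).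
Proof.
apply: (iffP existsP).
  by case=> t /andP [Hp /eqP Hl]; exists (val t); rewrite size_tuple.
case=> s [Hs Hp Hl].
have Hs' : size s == k by rewrite Hs.
by exists (Tuple Hs'); rewrite /= Hp Hl eqxx.
Qed.

Lemma gdist_geodesic (u v : T) :
  gdist e u v < #|T| ->
  exists p, [/\ size p = gdist e u v, path e u p, last u p = v
              & forall k, k < size p -> ~~ walk_of_len e u v k].
Proof.
rewrite /gdist => Hlt.
have Hhas : has (walk_of_len e u v) (iota 0 #|T|) by rewrite has_find size_iota.
have := nth_find 0 Hhas; rewrite nth_iota // add0n => /walkP [p [Hs Hp Hl]].
exists p; split=> // k; rewrite Hs => Hk.
have Hkt : k < #|T| by lia.
by have := before_find 0 Hk; rewrite nth_iota // add0n => ->.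
Qed.

End Walks.

Lemma last_take_nth (A : Type) (s : seq A) (x : A) (i : nat) :
  i <= size s -> last x (take i s) = nth x (x :: s) i.
Proof.
elim: s x i => [|y s IH] x [|i] //= Hi.
rewrite IH //; apply: set_nth_default => /=; lia.
Qed.

Section Geodesic.
Variables (T : finType) (e : rel T).
Hypotheses (e_sym : symmetric e) (e_irr : irreflexive e).

Variables (u : T) (p : seq T).
Hypothesis geo_path : path e u p.
Hypothesis geo_short :
  forall k, k < size p -> ~~ walk_of_len e u (last u p) k.

Local Notation d := (size p).
Local Notation pt i := (nth u (u :: p) i).

(* Subpaths of a geodesic are geodesics: a walk from x_i to x_j (i <= j)
   has length at least j - i, otherwise splicing it in would shorten p. *)
Lemma geodesic_shortcut (w : seq T) {i j : nat} :
  i <= j -> j <= d -> path e (pt i) w -> last (pt i) w = pt j ->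
  j - i <= size w.
Proof.
move=> Hij Hj Hw Hlw; rewrite leqNgt; apply/negP => Hlt.
have Hi : i <= d by lia.
have Hpi := geo_path; rewrite -(cat_take_drop i p) cat_path in Hpi.
have Hpj := geo_path; rewrite -(cat_take_drop j p) cat_path in Hpj.
case/andP: Hpi => [Hpi _]; case/andP: Hpj => [_ Hpj].
rewrite last_take_nth // in Hpj.
have Hlj : last (pt j) (drop j p) = last u p.
  by rewrite -{3}(cat_take_drop j p) last_cat last_take_nth.
set s := take i p ++ w ++ drop j p.
apply: (negP (geo_short (size s) _)).
  by rewrite /s !size_cat size_takel // size_drop; lia.
apply/walkP; exists s; split => //.
  by rewrite /s !cat_path Hpi /= last_take_nth // Hw /= Hlw.
by rewrite /s !last_cat last_take_nth // Hlw.
Qed.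

Lemma geodesic_uniq : uniq (u :: p).
Proof.
have Hgen i j : i < j -> j <= d -> pt i != pt j.
  move=> Hij Hj; apply/eqP => Heq.
  by have := geodesic_shortcut [::] (ltnW Hij) Hj erefl Heq; rewrite /=; lia.
apply/(uniqP u) => i j; rewrite !inE /= !ltnS => Hi Hj Heq.
case: (ltngtP i j) => // H; first by move: (Hgen i j H Hj); rewrite Heq eqxx.
by move: (Hgen j i H Hi); rewrite Heq eqxx.
Qed.

Lemma geodesic_chord {i j : nat} :
  i < j -> j <= d -> e (pt i) (pt j) -> j = i.+1.
Proof.
move=> Hij Hj Hedge.
have := geodesic_shortcut [:: pt j] (ltnW Hij) Hj.
by rewrite /= Hedge => /(_ erefl erefl); lia.
Qed.

(* A vertex adjacent to x_i and x_j gives a walk of length 2 between them,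
   so its path neighbours lie within distance 2 of each other. *)
Lemma geodesic_common_neighbour {x : T} {i j : nat} :
  i <= j -> j <= d -> e x (pt i) -> e x (pt j) -> j - i <= 2.
Proof.
move=> Hij Hj Hxi Hxj.
by have := geodesic_shortcut [:: x; pt j] Hij Hj;
  rewrite /= e_sym Hxi Hxj => /(_ erefl erefl).
Qed.

Definition path_vertices : {set T} := [set x in u :: p].
Definition off_path : {set T} := ~: path_vertices.

Definition first_nbr (x : T) : nat := find (e x) (u :: p).

Definition path_pairs : {set {set T}} :=
  [set [set pt i; pt i.+1] | i : 'I_d].
Definition attach_pairs : {set {set T}} :=
  [set [set xk.1; pt (first_nbr xk.1 + nat_of_ord xk.2)]
  | xk in setX off_path [set: 'I_3]].
Definition outside_pairs : {set {set T}} :=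
  [set A : {set T} | A \subset off_path & #|A| == 2].

Lemma card_off_path : #|off_path| = #|T| - d.+1.
Proof.
rewrite cardsCs setCK cardsE; congr (_ - _).
exact/card_uniqP/geodesic_uniq.
Qed.

Lemma path_vertexP (y : T) :
  y \in path_vertices -> exists2 i, i <= d & y = pt i.
Proof.
rewrite inE => Hy; exists (index y (u :: p)); last by rewrite nth_index.
by rewrite -ltnS index_mem.
Qed.

Lemma path_edge_pair (a b : T) :
  a \in path_vertices -> b \in path_vertices -> e a b ->
  [set a; b] \in path_pairs.
Proof.
move=> /path_vertexP [i Hi ->] /path_vertexP [j Hj ->] Hab.
have Hpair k l : k < l -> l <= d -> e (pt k) (pt l) ->
    [set pt k; pt l] \in path_pairs.
  move=> Hkl Hl Hedge; have Hl1 := geodesic_chord Hkl Hl Hedge.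
  have Hk : k < d by lia.
  by apply/imsetP; exists (Ordinal Hk); rewrite //= Hl1.
case: (ltngtP i j) => Hij; first exact: Hpair.
  by rewrite setUC; apply: Hpair => //; rewrite e_sym.
by move: Hab; rewrite Hij e_irr.
Qed.

(* An off-path vertex x adjacent to y = x_i: its first path neighbour sits at
   a position f <= i, and i - f <= 2 by [geodesic_common_neighbour]. *)
Lemma attach_edge_pair (x y : T) :
  x \in off_path -> y \in path_vertices -> e x y ->
  [set x; y] \in attach_pairs.
Proof.
move=> Hx /path_vertexP [i Hi ->] Hxy.
have Hhas : has (e x) (u :: p) by apply/hasP; exists (pt i); rewrite ?mem_nth.
have Hfi : first_nbr x <= i.
  by rewrite leqNgt; apply/negP => /(before_find u); rewrite Hxy.
have Hwin := geodesic_common_neighbour Hfi Hi (nth_find u Hhas) Hxy.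
have Hk : i - first_nbr x < 3 by lia.
apply/imsetP; exists (x, Ordinal Hk); first by rewrite in_setX Hx in_setT.
by rewrite /= subnKC.
Qed.

Lemma outside_edge_pair (a b : T) :
  a \in off_path -> b \in off_path -> e a b -> [set a; b] \in outside_pairs.
Proof.
move=> Ha Hb Hab; have Hne : a != b by apply: contraTneq Hab => ->; rewrite e_irr.
by rewrite inE subUset !sub1set Ha Hb -[#|_|]/#|[set a; b]| cards2 Hne.
Qed.

Lemma edges_cover :
  edges e \subset path_pairs :|: attach_pairs :|: outside_pairs.
Proof.
apply/subsetP => A; rewrite inE => /existsP [a /existsP [b /andP [Hab /eqP ->]]].
have Hoff y : (y \in off_path) = (y \notin path_vertices) by rewrite in_setC.
rewrite !in_setU; case Ha : (a \in path_vertices); case Hb : (b \in path_vertices).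
- by rewrite path_edge_pair.
- by rewrite setUC attach_edge_pair ?orbT ?Hoff ?Hb // e_sym.
- by rewrite attach_edge_pair ?orbT ?Hoff ?Ha.
- by rewrite outside_edge_pair ?orbT ?Hoff ?Ha ?Hb.
Qed.

Lemma card_edges_geodesic :
  #|edges e| <= 'C(#|T| - d.+1, 2) + 3 * (#|T| - d.+1) + d.
Proof.
have Hpath : #|path_pairs| <= d.
  by apply: (leq_trans (leq_imset_card _ _)); rewrite card_ord.
have Hattach : #|attach_pairs| <= 3 * (#|T| - d.+1).
  apply: (leq_trans (leq_imset_card _ _)).
  by rewrite cardsX cardsT card_ord card_off_path mulnC.
have Hout : #|outside_pairs| = 'C(#|T| - d.+1, 2).
  by rewrite cards_draws card_off_path.
have [Hunion2 _] := leq_card_setU (path_pairs :|: attach_pairs) outside_pairs.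
have [Hunion1 _] := leq_card_setU path_pairs attach_pairs.
apply: (leq_trans (subset_leq_card edges_cover)); apply: (leq_trans Hunion2).
rewrite Hout addnC -addnA leq_add2l addnC.
exact: leq_trans Hunion1 (leq_add Hpath Hattach).
Qed.

End Geodesic.

Lemma edge_card2 {T : finType} {e : rel T} {A : {set T}} :
  irreflexive e -> A \in edges e -> #|A| = 2.
Proof.
move=> e_irr; rewrite inE => /existsP [a /existsP [b /andP [Hab /eqP ->]]].
by rewrite cards2; case: eqVneq Hab => [-> | //]; rewrite e_irr.
Qed.

Lemma sigma2_le_edges {T : finType} {e : rel T} {d : nat} :
  irreflexive e -> (forall x, ecc e x <= d) -> sigma2 e <= #|edges e| * d ^ 2.
Proof.
move=> e_irr Hecc; rewrite /sigma2 -sum_nat_const; apply: leq_sum => A HA.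
by rewrite -(edge_card2 e_irr HA) -prod_nat_const; apply: leq_prod.
Qed.

Lemma diametral_geodesic {T : finType} {e : rel T} :
  0 < #|T| -> diam e < #|T| ->
  exists u p, [/\ size p = diam e, path e u p
                & forall k, k < size p -> ~~ walk_of_len e u (last u p) k].
Proof.
move=> HT0 Hdiam.
have [u Hu] := eq_bigmax (ecc e) HT0.
have [v Hv] := eq_bigmax (gdist e u) HT0.
have Huv : gdist e u v = diam e by rewrite /diam Hu /ecc Hv.
have [|p [Hs Hp Hl Hshort]] := @gdist_geodesic _ e u v; first lia.
by exists u, p; split; rewrite ?Hl // Hs.
Qed.

(* The edge count C(r,2) + 3r + d, weighted by d^2, is the announced bound
   written with n - d = r + 1. *)
Lemma zagreb_bound_identity (r d : nat) :
  ('C(r, 2) + 3 * r + d) * d ^ 2 = 'C(r.+1, 2) * d ^ 2 + 2 * r * d ^ 2 + d ^ 3.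
Proof. rewrite binS bin1 !expnS expn0; lia. Qed.

Theorem theorem2p11 (n d : nat) (T : finType) (e : rel T) :
  symmetric e -> irreflexive e -> gconnected e ->
  2 <= d -> d < n -> #|T| = n -> diam e = d ->
  sigma2 e <= 'C(n - d, 2) * d ^ 2 + 2 * (n - d - 1) * d ^ 2 + d ^ 3.
Proof.
move=> e_sym e_irr _ _ Hdn HT Hdiam.
have Hecc x : ecc e x <= d by rewrite -Hdiam; apply: leq_bigmax.
have HT0 : 0 < #|T| by lia.
have Hdiam_lt : diam e < #|T| by lia.
have [u [p [Hs Hp Hshort]]] := diametral_geodesic HT0 Hdiam_lt.
have Hedges := @card_edges_geodesic _ _ e_sym e_irr _ _ Hp Hshort.
rewrite Hs Hdiam HT in Hedges.
apply: (leq_trans (sigma2_le_edges e_irr Hecc)).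
have -> : n - d = (n - d.+1).+1 by lia.
have -> : (n - d.+1).+1 - 1 = n - d.+1 by lia.
by rewrite -zagreb_bound_identity leq_mul2r Hedges orbT.
Qed.
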